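(* Fix an epoch $\ell$ of the UCB-like policy described in the context and suppose that for every $S\subseteq\mathcal N$ and every $b\in(0,1)^N$, with $B(S\mid v)=\sum_{i\in S}b(i)\varphi(i,S\mid v)$, $$B(S\mid\hat v^\ell)-\sum_{i\in S}b(i)\varepsilon(n_i^{\ell-1})\le B(S\mid v^* )\le B(S\mid\hat v^\ell)+\sum_{i\in S}b(i)\varepsilon(n_i^{\ell-1}).$$ Then $OPT(\text{UCB-LP}(\hat v^\ell,n^{\ell-1},\omega))\ge(1-\omega)\,OPT(LP(v^* ))$.
   Context: $N$ products $\mathcal N=\{1,\dots,N\}$, $K$ resources $\mathcal K$; revenues $r(i)\in[0,1]$, consumptions $a(i,k)\in[0,1]$, $c(k)>0$. MNL probabilities: $\varphi(i,S\mid v)=v_i/(1+\sum_{j\in S}v_j)$ for $i\in S\subseteq\mathcal N$, $v\in\mathbb R_{>0}^N$. $v^*$ is the true preference vector. $LP(v)$: maximize $\sum_{S\subseteq\mathcal N}\sum_{i\in S}r(i)\varphi(i,S\mid v)y(S)$ subject to $\sum_S\sum_{i\in S}a(i,k)\varphi(i,S\mid v)y(S)\le c(k)$ for all $k$, $\sum_S y(S)=1$, $y\ge0$ (the sum over $S$ includes $S=\emptyset$); $OPT(\cdot)$ denotes an optimal value. In epoch $\ell$ of the policy, $\hat v^\ell\in\mathbb R_{>0}^N$ is the current MLE, $n_i^{\ell-1}\ge1$ is the number of past periods in which product $i$ was offered, $\varepsilon(n)=(\sqrt N+1)\Psi/\sqrt n$ for a constant $\Psi>0$, and $\omega\in[0,1]$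 is a tightening parameter. UCB-LP$(\hat v^\ell,n^{\ell-1},\omega)$: maximize $\sum_S\sum_{i\in S}r(i)\big(\varphi(i,S\mid\hat v^\ell)+\varepsilon(n_i^{\ell-1})\big)y(S)$ subject to $\sum_S\sum_{i\in S}a(i,k)\big(\varphi(i,S\mid\hat v^\ell)-\varepsilon(n_i^{\ell-1})\big)y(S)\le(1-\omega)c(k)$ for all $k$, $\sum_S y(S)=1$, $y\ge0$. *)

From HB Require Import structures.
From mathcomp Require Import all_boot all_order all_algebra.
From mathcomp Require Import boolp classical_sets reals.
Set Implicit Arguments. Unset Strict Implicit. Unset Printing Implicit Defensive.
Import Order.TTheory GRing.Theory Num.Theory.
Local Open Scope ring_scope.
Local Open Scope classical_set_scope.

(* Products are 'I_N, resources are 'I_K, assortments are S : {set 'I_N},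
   LP variables are functions y : {set 'I_N} -> R (y ranges over ALL subsets,
   including the empty set). *)

Section Defs.
Variables (R : realType) (N K : nat).

Definition mnl (v : 'I_N -> R) (i : 'I_N) (S : {set 'I_N}) : R :=
  v i / (1 + \sum_(j in S) v j).

Definition conf_eps (Psi : R) (n : nat) : R :=
  (Num.sqrt (N%:R) + 1) * Psi / Num.sqrt (n%:R).

Definition Bval (b : 'I_N -> R) (S : {set 'I_N}) (v : 'I_N -> R) : R :=
  \sum_(i in S) b i * mnl v i S.

Definition LP_obj (r : 'I_N -> R) (v : 'I_N -> R) (y : {set 'I_N} -> R) : R :=
  \sum_(S : {set 'I_N}) \sum_(i in S) r i * mnl v i S * y S.

Definition LP_feasible (a : 'I_N -> 'I_K -> R) (c : 'I_K -> R)
  (v : 'I_N -> R) (y : {set 'I_N} -> R) : Prop :=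
  [/\ forall k : 'I_K,
        \sum_(S : {set 'I_N}) \sum_(i in S) a i k * mnl v i S * y S <= c k,
      \sum_(S : {set 'I_N}) y S = 1
    & forall S, 0 <= y S].

Definition OPT_LP r a c v : R :=
  sup [set LP_obj r v y | y in LP_feasible a c v].

Definition UCB_obj (Psi : R) (r : 'I_N -> R) (vhat : 'I_N -> R) (n : 'I_N -> nat)
  (y : {set 'I_N} -> R) : R :=
  \sum_(S : {set 'I_N}) \sum_(i in S)
     r i * (mnl vhat i S + conf_eps Psi (n i)) * y S.

Definition UCB_feasible (Psi : R) (a : 'I_N -> 'I_K -> R) (c : 'I_K -> R)
  (vhat : 'I_N -> R) (n : 'I_N -> nat) (omega : R) (y : {set 'I_N} -> R) : Prop :=
  [/\ forall k : 'I_K,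
        \sum_(S : {set 'I_N}) \sum_(i in S)
           a i k * (mnl vhat i S - conf_eps Psi (n i)) * y S <= (1 - omega) * c k,
      \sum_(S : {set 'I_N}) y S = 1
    & forall S, 0 <= y S].

Definition OPT_UCB Psi r a c vhat n omega : R :=
  sup [set UCB_obj Psi r vhat n y | y in UCB_feasible Psi a c vhat n omega].

End Defs.

From HB Require Import structures.
From mathcomp Require Import all_boot all_order all_algebra.
From mathcomp Require Import boolp classical_sets reals.
From mathcomp Require Import ring lra.
Import Order.TTheory GRing.Theory Num.Theory.
Local Open Scope ring_scope.

Set Implicit Arguments.
Unset Strict Implicit.

(* Take a y feasible for LP at v* and move an omega fraction of its mass to the
   empty assortment, which consumes nothing and earns nothing.  The confidence
   bounds, applied with b = a(., k) and b = r, say that the UCB-LP consumption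
   coefficients are pessimistic and its revenue coefficients optimistic, so the
   mixed vector is UCB-LP feasible with objective at least (1 - omega) times
   the LP objective of y at v*.  The bounds are only assumed for b in the open
   cube; since B is affine in b, they extend to the closed cube, which contains
   r and a(., k). *)

Lemma sum_le0_closed_cube (R : realFieldType) (I : finType) (P : pred I)
    (d : I -> R) :
  (forall b : I -> R, (forall i, 0 < b i < 1) -> \sum_(i | P i) b i * d i <= 0) ->
  forall b : I -> R, (forall i, 0 <= b i <= 1) -> \sum_(i | P i) b i * d i <= 0.
Proof.
move=> open_le0 b b01.
set D := \sum_(i | P i) b i * d i; set H := \sum_(i | P i) 2^-1 * d i.
(* (1 - t) b + t/2 lies in the open cube for 0 < t <= 1 and tends to b *)
have shrink_le0 t : 0 < t -> t <= 1 -> (1 - t) * D + t * H <= 0.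
  move=> t0 t1.
  have -> : (1 - t) * D + t * H =
            \sum_(i | P i) ((1 - t) * b i + t * 2^-1) * d i.
    by rewrite /D /H !mulr_sumr -big_split /=; apply: eq_bigr => i _; ring.
  apply: open_le0 => i; have /andP[bi0 bi1] := b01 i.
  have : 0 <= (1 - t) * b i <= 1 - t.
    by rewrite mulr_ge0 ?ler_piMr //=; lra.
  by move=> /andP[? ?]; apply/andP; split; lra.
apply/ler_addgt0Pr => e e0; rewrite add0r.
set m := `|D - H|; have em0 : 0 < e + m by rewrite ltr_wpDr ?normr_ge0.
pose t := e / (e + m).
have t0 : 0 < t by rewrite divr_gt0.
have t1 : t <= 1 by rewrite ler_pdivrMr // mul1r lerDl normr_ge0.
have te : t * e + t * m = e by rewrite -mulrDr mulfVK ?gt_eqF.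
have := shrink_le0 t t0 t1.
have : t * (D - H) <= t * m by rewrite ler_pM2l // ler_norm.
nra.
Qed.

Section AssortmentForms.
Variables (R : realDomainType) (T : finType).
Implicit Types (f g : T -> {set T} -> R) (y z : {set T} -> R).

(* The common shape of the objectives and constraints of LP and UCB-LP. *)
Definition assort_form f y : R :=
  \sum_(S : {set T}) \sum_(i in S) f i S * y S.

Definition set0_mass (S : {set T}) : R := (S == finset.set0)%:R.

Definition mix_set0 (omega : R) y (S : {set T}) : R :=
  (1 - omega) * y S + omega * set0_mass S.

Lemma assort_form_lin f (alpha beta : R) y z :
  assort_form f (fun S => alpha * y S + beta * z S) =
  alpha * assort_form f y + beta * assort_form f z.
Proof.
rewrite /assort_form !mulr_sumr -big_split /=; apply: eq_bigr => S _.
by rewrite !mulr_sumr -big_split /=; apply: eq_bigr => i _; ring.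
Qed.

Lemma assort_form_set0_mass f : assort_form f set0_mass = 0.
Proof.
apply: big1 => S _; rewrite /set0_mass.
have [->|_] := eqVneq S finset.set0; first by rewrite big_set0.
by apply: big1 => i _; rewrite mulr0.
Qed.

Lemma assort_form_mix_set0 f omega y :
  assort_form f (mix_set0 omega y) = (1 - omega) * assort_form f y.
Proof. by rewrite assort_form_lin assort_form_set0_mass mulr0 addr0. Qed.

Lemma sum_set0_mass : \sum_(S : {set T}) set0_mass S = 1.
Proof.
rewrite (bigD1 finset.set0) //= /set0_mass eqxx big1 ?addr0 // => S.
by move/negbTE ->.
Qed.

Lemma set0_mass_ge0 S : 0 <= set0_mass S.
Proof. exact: ler0n. Qed.

Lemma sum_mix_set0 omega y :
  \sum_(S : {set T}) mix_set0 omega y S = (1 - omega) * \sum_S y S + omega.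
Proof. by rewrite big_split /= -!mulr_sumr sum_set0_mass mulr1. Qed.

Lemma mix_set0_ge0 omega y :
  0 <= omega <= 1 -> (forall S, 0 <= y S) -> forall S, 0 <= mix_set0 omega y S.
Proof.
move=> /andP[om0 om1] y0 S.
by rewrite addr_ge0 ?mulr_ge0 ?set0_mass_ge0 ?subr_ge0.
Qed.

Lemma ler_assort_form f g y :
  (forall S : {set T}, \sum_(i in S) f i S <= \sum_(i in S) g i S) ->
  (forall S, 0 <= y S) -> assort_form f y <= assort_form g y.
Proof.
move=> fg y0; apply: ler_sum => S _; rewrite -!mulr_suml.
by rewrite ler_wpM2r.
Qed.

Lemma assort_form_le_norm f y :
  (forall S, 0 <= y S) -> \sum_(S : {set T}) y S = 1 ->
  assort_form f y <= \sum_(S : {set T}) \sum_(i in S) `|f i S|.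
Proof.
move=> y0 y1; apply: ler_sum => S _; apply: ler_sum => i _.
have yS1 : y S <= 1 by rewrite -y1 (bigD1 S) //= lerDl sumr_ge0.
apply: le_trans (ler_norm _) _; rewrite normrM (ger0_norm (y0 S)).
by rewrite ler_piMr.
Qed.

End AssortmentForms.

Arguments set0_mass {R T} S.

Lemma le_scale_sup (R : realType) (k : R) (E F : set R) :
  0 <= k -> (E !=set0)%classic -> has_sup F ->
  (forall x, E x -> exists2 z, F z & k * x <= z) -> k * sup E <= sup F.
Proof.
move=> k0 [x0 Ex0] supF EF.
have [k_eq0|kn0] := eqVneq k 0.
  have [z Fz] := EF x0 Ex0; rewrite k_eq0 !mul0r => z0.
  exact: le_trans z0 (sup_upper_bound supF Fz).
have kgt0 : 0 < k by rewrite lt_def kn0.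
rewrite -ler_pdivlMl //; apply: ge_sup; first by exists x0.
move=> x /EF[z Fz xz]; rewrite ler_pdivlMl //.
exact: le_trans xz (sup_upper_bound supF Fz).
Qed.

Section ConfidenceBounds.
Variables (R : realType) (N K : nat).
Variables (vstar vhat : 'I_N -> R) (n : 'I_N -> nat) (Psi : R).

Let eps i := conf_eps N Psi (n i).

Hypothesis conf_bounds : forall (S : {set 'I_N}) (b : 'I_N -> R),
  (forall i, 0 < b i < 1) ->
  Bval b S vhat - \sum_(i in S) b i * eps i <= Bval b S vstar /\
  Bval b S vstar <= Bval b S vhat + \sum_(i in S) b i * eps i.

Lemma conf_lower_closed_cube (S : {set 'I_N}) (b : 'I_N -> R) :
  (forall i, 0 <= b i <= 1) ->
  \sum_(i in S) b i * (mnl vhat i S - eps i) <= \sum_(i in S) b i * mnl vstar i S.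
Proof.
move=> b01; rewrite -subr_le0 -sumrB.
under eq_bigr do rewrite -mulrBr.
apply: sum_le0_closed_cube b01 => {}b b01.
have -> : \sum_(i in S) b i * (mnl vhat i S - eps i - mnl vstar i S) =
          Bval b S vhat - \sum_(i in S) b i * eps i - Bval b S vstar.
  by rewrite /Bval -!sumrB; apply: eq_bigr => i _; ring.
by rewrite subr_le0; case: (conf_bounds S b01).
Qed.

Lemma conf_upper_closed_cube (S : {set 'I_N}) (b : 'I_N -> R) :
  (forall i, 0 <= b i <= 1) ->
  \sum_(i in S) b i * mnl vstar i S <= \sum_(i in S) b i * (mnl vhat i S + eps i).
Proof.
move=> b01; rewrite -subr_le0 -sumrB.
under eq_bigr do rewrite -mulrBr.
apply: sum_le0_closed_cube b01 => {}b b01.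
have -> : \sum_(i in S) b i * (mnl vstar i S - (mnl vhat i S + eps i)) =
          Bval b S vstar - (Bval b S vhat + \sum_(i in S) b i * eps i).
  by rewrite /Bval -big_split -sumrB /=; apply: eq_bigr => i _; ring.
by rewrite subr_le0; case: (conf_bounds S b01).
Qed.

Variables (r : 'I_N -> R) (a : 'I_N -> 'I_K -> R) (c : 'I_K -> R) (omega : R).
Hypotheses (r01 : forall i, 0 <= r i <= 1) (a01 : forall i k, 0 <= a i k <= 1).
Hypothesis omega01 : 0 <= omega <= 1.

Let omegaC_ge0 : 0 <= 1 - omega.
Proof. by case/andP: omega01; lra. Qed.

Lemma UCB_feasible_mix_set0 (y : {set 'I_N} -> R) :
  LP_feasible a c vstar y -> UCB_feasible Psi a c vhat n omega (mix_set0 omega y).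
Proof.
move=> [cap y1 y0].
split; last exact: mix_set0_ge0.
- move=> k; rewrite -[leLHS]/(assort_form _ _) assort_form_mix_set0 ler_wpM2l //.
  apply: le_trans (cap k).
  by apply: ler_assort_form y0 => S; rewrite conf_lower_closed_cube.
- by rewrite sum_mix_set0 y1; ring.
Qed.

Lemma UCB_obj_mix_set0_ge (y : {set 'I_N} -> R) :
  (forall S, 0 <= y S) ->
  (1 - omega) * LP_obj r vstar y <= UCB_obj Psi r vhat n (mix_set0 omega y).
Proof.
move=> y0; rewrite -[leRHS]/(assort_form _ _) assort_form_mix_set0 ler_wpM2l //.
by apply: ler_assort_form y0 => S; rewrite conf_upper_closed_cube.
Qed.

End ConfidenceBounds.

Theorem lemma4 (R : realType) (N K : nat)
  (r : 'I_N -> R) (a : 'I_N -> 'I_K -> R) (c : 'I_K -> R)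
  (vstar vhat : 'I_N -> R) (n : 'I_N -> nat) (Psi omega : R) :
  (forall i, 0 <= r i <= 1) ->
  (forall i k, 0 <= a i k <= 1) ->
  (forall k, 0 < c k) ->
  (forall i, 0 < vstar i) ->
  (forall i, 0 < vhat i) ->
  (forall i, (1 <= n i)%N) ->
  0 < Psi ->
  0 <= omega <= 1 ->
  (forall (S : {set 'I_N}) (b : 'I_N -> R), (forall i, 0 < b i < 1) ->
     Bval b S vhat - \sum_(i in S) b i * conf_eps N Psi (n i) <= Bval b S vstar /\
     Bval b S vstar <= Bval b S vhat + \sum_(i in S) b i * conf_eps N Psi (n i)) ->
  OPT_UCB Psi r a c vhat n omega >= (1 - omega) * OPT_LP r a c vstar.
Proof.
move=> r01 a01 c0 _ _ _ _ omega01 conf.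
have feas_mix := UCB_feasible_mix_set0 conf a01 omega01.
have obj_mix := UCB_obj_mix_set0_ge conf r01 omega01.
have feas0 : LP_feasible a c vstar set0_mass.
  split; [|exact: sum_set0_mass|exact: set0_mass_ge0].
  by move=> k; rewrite -[leLHS]/(assort_form _ _) assort_form_set0_mass ltW.
rewrite /OPT_UCB /OPT_LP; apply: le_scale_sup.
- by case/andP: omega01; lra.
- by exists (LP_obj r vstar set0_mass), set0_mass.
- split; first by exists (UCB_obj Psi r vhat n (mix_set0 omega set0_mass)),
    (mix_set0 omega set0_mass); first exact: feas_mix.
  exists (\sum_(S : {set 'I_N}) \sum_(i in S) `|r i * (mnl vhat i S + conf_eps N Psi (n i))|).
  by move=> _ [y [_ y1 y0] <-]; apply: assort_form_le_norm.
- move=> _ [y ylp <-]; exists (UCB_obj Psi r vhat n (mix_set0 omega y)).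
    by exists (mix_set0 omega y); first exact: feas_mix.
  by case: ylp => _ _ y0; exact: obj_mix.
Qed.
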